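(* Let $k$ be a positive integer, let $N$ be an integer with $\gcd(N,k!)=1$, and let $A=\{a_1,a_2,\dots,a_n\}\subseteq\mathbb{Z}_N$ be a $k$-fold Sidon set. Let $k_+,k_-$ be integers with $0\leq k_-\leq k_+\leq k$ and $k_++k_-\geq 1$. In the group $G \triangleq \mathbb{Z}_{2(k_++k_-)+1} \times \mathbb{Z}_N$ let \[S\triangleq \{ (1,x) : x \in A\}.\] Then $G \ge [-k_-,k_+]^* \diamond_2 S$.
   Context: $[a,b]=\{a,a+1,\dots,b\}$ and $[a,b]^*=[a,b]\setminus\{0\}$. $k$-fold Sidon sets: let $k\ge1$ and $\gcd(N,k!)=1$. For integers $c_1,c_2,c_3,c_4\in[-k,k]$ with $c_1+c_2+c_3+c_4=0$, let $\mathcal{S}$ be the collection of sets $T\subseteq\{1,2,3,4\}$ such that $\sum_{i\in T}c_i=0$ and $c_i\ne0$ for all $i\in T$ (so $\varnothing\in\mathcal{S}$). A solution $(x_1,x_2,x_3,x_4)\in\mathbb{Z}_N^4$ of $c_1x_1+c_2x_2+c_3x_3+c_4x_4\equiv0\pmod N$ is trivial if there is a partition of $\{i: c_i\ne0\}$ into two sets $T_1,T_2\in\mathcal{S}$ such that $x_i=x_j$ for all $i,j\in T_1$ and for all $i,j\in T_2$. A set $A\subseteq\mathbb{Z}_N$ is a $k$-fold Sidon set if for every such $c_1,\dots,c_4$, this equation has only trivial solutions with $x_1,\dots,x_4\in A$. For a finite Abelian group $G$, a finite set $M\subseteq\mathbb{Z}\setminus\{0\}$ and $S=\{s_1,\dots,s_n\}\subseteq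 G$, we write $G\ge M\diamond_t S$ if the elements $\sum_i e_is_i$, over all $\mathbf{e}\in(M\cup\{0\})^n$ with $1\le\mathrm{wt}(\mathbf{e})\le t$, are all distinct and non-zero in $G$ ($\mathrm{wt}$ = Hamming weight). *)

From HB Require Import structures.
From mathcomp Require Import all_boot all_order all_algebra.
Set Implicit Arguments. Unset Strict Implicit. Unset Printing Implicit Defensive.
Import Order.TTheory GRing.Theory Num.Theory.
Local Open Scope ring_scope.

(* Z_N is represented as 'I_N'.+1 (N = N'.+1 >= 1) with its Zp additive group. *)

Definition in_calS (c : {ffun 'I_4 -> int}) (T : {set 'I_4}) : bool :=
  (\sum_(i in T) c i == 0) && [forall i in T, c i != 0].

Definition trivial_solution (G : zmodType) (c : {ffun 'I_4 -> int})
    (x : {ffun 'I_4 -> G}) : Prop :=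
  exists T1 T2 : {set 'I_4},
    [/\ in_calS c T1, in_calS c T2, [disjoint T1 & T2] &
        T1 :|: T2 = [set i | c i != 0]] /\
    (forall i j, i \in T1 -> j \in T1 -> x i = x j) /\
    (forall i j, i \in T2 -> j \in T2 -> x i = x j).

Definition kfold_Sidon (N' k : nat) (A : {set 'I_N'.+1}) : Prop :=
  forall c : {ffun 'I_4 -> int},
    (forall i, - (k%:Z) <= c i <= k%:Z) -> \sum_i c i = 0 ->
    forall x : {ffun 'I_4 -> 'I_N'.+1},
      (forall i, x i \in A) ->
      \sum_i (x i *~ c i) = 0 ->
      trivial_solution c x.

Definition wt n (e : {ffun 'I_n -> int}) : nat := #|[set i | e i != 0]|.

(* G >= M <>_t S, for S = {s_1,...,s_n} given by an injective s : 'I_n -> G,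
   M a set of nonzero integers given as a predicate. *)
Definition diamond (G : zmodType) (M : pred int) (t n : nat) (s : 'I_n -> G) : Prop :=
  let adm (e : {ffun 'I_n -> int}) :=
    (forall i, e i = 0 \/ M (e i)) /\ (1 <= wt e <= t)%N in
  forall e e' : {ffun 'I_n -> int}, adm e -> adm e' ->
    \sum_i (s i *~ e i) != 0 /\
    (\sum_i (s i *~ e i) = \sum_i (s i *~ e' i) -> e = e').

Definition int_range_star (a b : int) : pred int := fun e => (a <= e <= b) && (e != 0).

(** Write [s_i = (1, a_i)].  Two admissible coefficient vectors of weight at
    most 2 are combinations [u1 s_p1 + u2 s_p2] and [v1 s_q1 + v2 s_q2] with
    coefficients in [[-k_-, k_+]].  If the combinations agree, the first
    coordinate gives [u1 + u2 = v1 + v2] modulo [2(k_+ + k_-) + 1], hence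
    exactly, since both sides lie in [[-2k_-, 2k_+]].  The second coordinate
    is then a balanced equation [u1 a_p1 + u2 a_p2 - v1 a_q1 - v2 a_q2 = 0]
    with coefficients in [[-k, k]], which the Sidon property forces to be
    trivial; a trivial solution cancels coefficient by coefficient on every
    value, so the two vectors coincide.  Non-vanishing is the case where the
    second vector is zero. *)
From HB Require Import structures.
From mathcomp Require Import all_boot all_order all_algebra zify.
Import Order.TTheory GRing.Theory Num.Theory.
Local Open Scope ring_scope.

Lemma trivial_solution_fiber_sum {G : zmodType} {c : {ffun 'I_4 -> int}}
    {x : {ffun 'I_4 -> G}} :
  trivial_solution c x -> forall v, \sum_i c i * (x i == v)%:Z = 0.
Proof.
move=> [T1 [T2 [[S1 S2 disjT coverT] [constT1 constT2]]]] v.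
have block T : in_calS c T -> (forall i j, i \in T -> j \in T -> x i = x j) ->
    \sum_(i in T) c i * (x i == v)%:Z = 0.
  move=> /andP[/eqP sumT _] constT; have [i0 Ti0 | T0] := pickP (mem T).
    rewrite (eq_bigr (fun i => c i * (x i0 == v)%:Z)) => [|i Ti].
      by rewrite -big_distrl /= sumT mul0r.
    by rewrite (constT i i0).
  by rewrite big_pred0.
rewrite (bigID (mem (T1 :|: T2))) /= [X in _ + X]big1 ?addr0; last first.
  by move=> i; rewrite coverT inE negbK => /eqP ->; rewrite mul0r.
rewrite (eq_bigl [predU T1 & T2]) => [|i]; last by rewrite !inE.
by rewrite bigU //= block // block // addr0.
Qed.

Lemma wt_le2_delta2 {n} {P : pred int} {e : {ffun 'I_n -> int}} (p0 : 'I_n) :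
  P 0 -> (forall i, P (e i)) -> (wt e <= 2)%N ->
  exists p1 p2 : 'I_n, exists u1 u2 : int,
    [/\ P u1, P u2 & forall i, e i = u1 * (i == p1)%:Z + u2 * (i == p2)%:Z].
Proof.
move=> P0 Pe; rewrite /wt; set S := [set i | e i != 0].
have eS i : i \notin S -> e i = 0 by rewrite inE negbK => /eqP.
rewrite leq_eqVlt ltnS leq_eqVlt ltnS leqn0; case/or3P.
- case/cards2P=> p [q [pq defS]]; exists p, q, (e p), (e q); split=> // i.
  have [->|ip] := eqVneq i p; first by rewrite (negbTE pq) mulr1 mulr0 addr0.
  have [->|iq] := eqVneq i q; first by rewrite mulr1 mulr0 add0r.
  by rewrite eS ?defS ?inE ?(negbTE ip) ?(negbTE iq) // !mulr0 addr0.
- case/cards1P=> p defS; exists p, p, (e p), 0; split=> // i.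
  have [->|ip] := eqVneq i p; first by rewrite mulr1 mul0r addr0.
  by rewrite eS ?defS ?inE ?(negbTE ip) // mulr0 mul0r addr0.
- move/eqP/cards0_eq=> S0; exists p0, p0, 0, 0; split=> // i.
  by rewrite eS ?S0 ?inE // !mul0r addr0.
Qed.

Lemma sum_mulz_delta2 (G : zmodType) n (s : 'I_n -> G) p1 p2 (u1 u2 : int) :
  \sum_i s i *~ (u1 * (i == p1)%:Z + u2 * (i == p2)%:Z) = s p1 *~ u1 + s p2 *~ u2.
Proof.
have delta p u : \sum_i s i *~ (u * (i == p)%:Z) = s p *~ u.
  rewrite (bigD1 p) //= eqxx mulr1 big1 ?addr0 // => i /negbTE ->.
  by rewrite mulr0 mulr0z.
by rewrite -!delta -big_split; apply: eq_bigr => i _; rewrite mulrzDr.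
Qed.

Lemma Zp1_mulz_eq0 m (w : int) :
  (`|w| <= m)%N -> (inZp 1 : 'I_m.+1) *~ w = 0 -> w = 0.
Proof.
have Zp1_mulrn_eq0 j : (j <= m)%N -> (inZp 1 : 'I_m.+1) *+ j = 0 -> j = 0%N.
  move=> le_jm /(congr1 val) /=.
  by rewrite Zp_mulrn /= modnMml mul1n modn_small.
case: w => j /= le_jm; first by move/Zp1_mulrn_eq0 ->.
by rewrite NegzE mulrNz => /eqP; rewrite oppr_eq0 => /eqP /Zp1_mulrn_eq0 ->.
Qed.

Lemma kfold_Sidon_delta2_uniq {k N' n} {a : 'I_n -> 'I_N'.+1}
    {p1 p2 q1 q2 : 'I_n} {u1 u2 v1 v2 : int} :
  injective a -> kfold_Sidon k [set a i | i in 'I_n] ->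
  (forall u, u \in [:: u1; u2; v1; v2] -> - (k%:Z) <= u <= k%:Z) ->
  u1 + u2 = v1 + v2 -> a p1 *~ u1 + a p2 *~ u2 = a q1 *~ v1 + a q2 *~ v2 ->
  forall l, u1 * (l == p1)%:Z + u2 * (l == p2)%:Z = v1 * (l == q1)%:Z + v2 * (l == q2)%:Z.
Proof.
move=> a_inj Sidon le_k sum_uv sum_a l.
have [bu1 bu2 bv1 bv2] : [/\ - (k%:Z) <= u1 <= k%:Z, - (k%:Z) <= u2 <= k%:Z,
    - (k%:Z) <= v1 <= k%:Z & - (k%:Z) <= v2 <= k%:Z].
  by split; apply: le_k; rewrite !inE eqxx ?orbT.
pose c : {ffun 'I_4 -> int} := [ffun i : 'I_4 => nth 0 [:: u1; u2; - v1; - v2] i].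
pose x : {ffun 'I_4 -> 'I_N'.+1} :=
  [ffun i : 'I_4 => nth (a l) [:: a p1; a p2; a q1; a q2] i].
have triv : trivial_solution c x.
  apply: Sidon.
  - by move=> [[|[|[|[|i]]]] lt_i4] //=; rewrite ffunE /=; lia.
  - by rewrite !big_ord_recr big_ord0 /= !ffunE /=; lia.
  - by move=> [[|[|[|[|i]]]] lt_i4] //=; rewrite ffunE /= imset_f.
  rewrite !big_ord_recr big_ord0 /= !ffunE /= !mulrNz.
  by rewrite add0r -addrA -opprD sum_a subrr.
apply/eqP; rewrite -subr_eq0; apply/eqP.
move: (trivial_solution_fiber_sum triv (a l)).
rewrite !big_ord_recr big_ord0 /= !ffunE /= !(inj_eq a_inj) !(eq_sym l).
by rewrite add0r !mulNr -addrA -opprD.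
Qed.

Lemma wt_ffun0 n : wt ([ffun=> 0] : {ffun 'I_n -> int}) = 0%N.
Proof. by apply/eqP; rewrite cards_eq0; apply/eqP/setP=> i; rewrite !inE ffunE eqxx. Qed.

Section CyclicLift.

Context {k N' n kp km : nat} {a : 'I_n -> 'I_N'.+1}.
Hypotheses (a_inj : injective a) (A_Sidon : kfold_Sidon k [set a i | i in 'I_n]).
Hypotheses (kp_le_k : (kp <= k)%N) (km_le_k : (km <= k)%N).

Let s i : ('I_(2 * (kp + km)).+1 * 'I_N'.+1)%type := (inZp 1, a i).

Lemma lift_combination_inj (e e' : {ffun 'I_n -> int}) :
  (forall i, - (km%:Z) <= e i <= kp%:Z) -> (forall i, - (km%:Z) <= e' i <= kp%:Z) ->
  (wt e <= 2)%N -> (wt e' <= 2)%N ->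
  \sum_i s i *~ e i = \sum_i s i *~ e' i -> e = e'.
Proof.
move=> bnd_e bnd_e' wt_e wt_e' sum_ee'; apply/ffunP=> l.
pose P u := - (km%:Z) <= u <= kp%:Z.
have P0 : P 0 by rewrite /P; lia.
have [p1 [p2 [u1 [u2 [Pu1 Pu2 def_e]]]]] := wt_le2_delta2 l P0 bnd_e wt_e.
have [q1 [q2 [v1 [v2 [Pv1 Pv2 def_e']]]]] := wt_le2_delta2 l P0 bnd_e' wt_e'.
have sum_s : s p1 *~ u1 + s p2 *~ u2 = s q1 *~ v1 + s q2 *~ v2.
  rewrite -!sum_mulz_delta2 -(eq_bigr _ (fun i _ => congr1 (intmul (s i)) (def_e i))).
  by rewrite -(eq_bigr _ (fun i _ => congr1 (intmul (s i)) (def_e' i))).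
have sum_uv : u1 + u2 = v1 + v2.
  apply/eqP; rewrite -subr_eq0; apply/eqP.
  apply: (@Zp1_mulz_eq0 (2 * (kp + km))); first by move: Pu1 Pu2 Pv1 Pv2; rewrite /P; lia.
  have sum_fst := congr1 fst sum_s; rewrite !raddfD !raddfMz /= in sum_fst.
  by rewrite mulrzBr !mulrzDr sum_fst subrr.
have sum_snd := congr1 snd sum_s; rewrite !raddfD !raddfMz /= in sum_snd.
rewrite def_e def_e'; apply: (kfold_Sidon_delta2_uniq a_inj A_Sidon _ sum_uv sum_snd).
by move=> u; rewrite !inE => /or4P[] /eqP->; move: Pu1 Pu2 Pv1 Pv2; rewrite /P; lia.
Qed.

End CyclicLift.

Theorem theorem10 (k N' n : nat) (a : 'I_n -> 'I_N'.+1) (kp km : nat) :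
  (0 < k)%N -> coprime N'.+1 k`! -> injective a ->
  kfold_Sidon k [set a i | i in 'I_n] ->
  (km <= kp)%N -> (kp <= k)%N -> (1 <= kp + km)%N ->
  diamond (G := ('I_(2 * (kp + km)).+1 * 'I_N'.+1)%type)
    (int_range_star (- (km%:Z)) (kp%:Z)) 2
    (fun i => (inZp 1, a i)).
Proof.
move=> _ _ a_inj A_Sidon km_le_kp kp_le_k _.
have inj := lift_combination_inj a_inj A_Sidon kp_le_k (leq_trans km_le_kp kp_le_k).
have bounded (e : {ffun 'I_n -> int}) :
    (forall i, e i = 0 \/ int_range_star (- (km%:Z)) (kp%:Z) (e i)) ->
    forall i, - (km%:Z) <= e i <= kp%:Z.
  by move=> adm i; case: (adm i) => [->|/andP[] //]; lia.
move=> e e' [adm_e /andP[wt_e_gt0 wt_e]] [adm_e' /andP[_ wt_e']]; split.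
  apply/eqP=> sum_e0; have e0 : e = [ffun=> 0].
    apply: inj (bounded e adm_e) _ wt_e _ _ => [i||]; rewrite ?wt_ffun0 //.
      by rewrite ffunE; lia.
    by rewrite sum_e0 big1 // => i _; rewrite ffunE mulr0z.
  by move: wt_e_gt0; rewrite e0 wt_ffun0.
exact: inj (bounded e adm_e) (bounded e' adm_e') wt_e wt_e'.
Qed.
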